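(* For integers $n\ge k\ge 0$ let $P(n,k)=k!\,[2(n-k)-1]!!\,\binom{2n-k-1}{2(n-k)}$. Then for all $k,\ell\in\{0,1,2,\dots\}$, \[ \sum_{m=0}^{k}(-1)^{m}\binom{k}{m}\binom{m/2}{\ell}= \begin{cases}0, & k>\ell,\\[2pt] \dfrac{(-1)^{\ell}}{(2\ell)!!}P(\ell,k), & \ell\ge k.\end{cases} \]
   Context: Here $\binom{x}{\ell}=\frac{x(x-1)\cdots(x-\ell+1)}{\ell!}$ for real $x$. Double factorials: $(2j)!!=2^j j!$, with $0!!=1$, and $(2j-1)!!=1\cdot3\cdots(2j-1)$ for $j\ge1$, with $(-1)!!=1$. The binomial coefficient $\binom{2n-k-1}{2(n-k)}$ equals $1$ when $n=k$, including the case $n=k=0$, where it is $\binom{-1}{0}=1$. *)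

From mathcomp Require Import all_boot all_order all_algebra.
Set Implicit Arguments. Unset Strict Implicit. Unset Printing Implicit Defensive.
Import Order.TTheory GRing.Theory Num.Theory.
Local Open Scope ring_scope.

Definition gbinom (x : rat) (l : nat) : rat :=
  (\prod_(i < l) (x - i%:R)) / (l`!)%:R.

(* even double factorial (2j)!! = 2^j j! *)
Definition even_dfact (j : nat) : nat := (2 ^ j * j`!)%N.

(* odd double factorial (2j-1)!! = 1*3*...*(2j-1), with (-1)!! = 1 *)
Definition odd_dfact (j : nat) : nat := (\prod_(i < j) (2 * i + 1))%N.

Definition Pnk (n k : nat) : rat :=
  (k`!)%:R * (odd_dfact (n - k))%:R
  * gbinom ((2 * n)%:R - k%:R - 1) (2 * (n - k)).

From mathcomp Require Import all_boot all_order all_algebra.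
From mathcomp Require Import ring lra zify.
Set Implicit Arguments. Unset Strict Implicit. Unset Printing Implicit Defensive.
Import Order.TTheory GRing.Theory Num.Theory.
Local Open Scope ring_scope.

(* Write S(k, g) = sum_m (-1)^m C(k, m) g(m) and f_l(m) = binom(m/2, l).  Pascal's rule in
   x = m/2 gives f_(l+1)(m+2) - f_(l+1)(m) = f_l(m), and S(k+1, g) = S(k, g) - S(k, g(. + 1));
   together, S(k+2, f_(l+1)) = 2 S(k+1, f_(l+1)) + S(k, f_l).  The closed form obeys the
   same recurrence (a binomial identity) and agrees with S for k = 0, for k = 1 (through
   binom(1/2, l)) and for l = 0, so the two coincide. *)

Section AltBinomSum.

Variable R : comPzRingType.

Definition alt_binom_sum (k : nat) (g : nat -> R) : R :=
  \sum_(0 <= m < k.+1) (-1) ^+ m * 'C(k, m)%:R * g m.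

Lemma alt_binom_sum0 (g : nat -> R) : alt_binom_sum 0 g = g 0%N.
Proof. by rewrite /alt_binom_sum big_nat1 expr0 bin0 !mul1r. Qed.

Lemma eq_alt_binom_sum k (g h : nat -> R) :
  g =1 h -> alt_binom_sum k g = alt_binom_sum k h.
Proof. by move=> eq_gh; apply: eq_bigr => m _; rewrite eq_gh. Qed.

Lemma alt_binom_sumB k (g h : nat -> R) :
  alt_binom_sum k (fun m => g m - h m) = alt_binom_sum k g - alt_binom_sum k h.
Proof. by rewrite /alt_binom_sum -sumrB; apply: eq_bigr => m _; ring. Qed.

Lemma alt_binom_sumS k (g : nat -> R) :
  alt_binom_sum k.+1 g = alt_binom_sum k g - alt_binom_sum k (g \o succn).
Proof.
rewrite /alt_binom_sum big_nat_recl // [in RHS]big_nat_recl //.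
have -> : \sum_(0 <= m < k.+1) (-1) ^+ m.+1 * 'C(k.+1, m.+1)%:R * g m.+1 =
    \sum_(0 <= m < k.+1) (-1) ^+ m.+1 * 'C(k, m.+1)%:R * g m.+1
  - \sum_(0 <= m < k.+1) (-1) ^+ m * 'C(k, m)%:R * g m.+1.
  by rewrite -sumrB; apply: eq_bigr => m _; rewrite binS natrD exprS; ring.
rewrite !bin0 (big_nat_recr k) //= bin_small // mulr0 mul0r addr0; ring.
Qed.

Lemma alt_binom_sum_cst k (c : R) : alt_binom_sum k.+1 (fun=> c) = 0.
Proof. by rewrite alt_binom_sumS subrr. Qed.

End AltBinomSum.

Lemma gbinom0 x : gbinom x 0 = 1.
Proof. by rewrite /gbinom big_ord0 fact0 divr1. Qed.

Lemma gbinomS x j : gbinom x j.+1 = gbinom x j * (x - j%:R) / j.+1%:R.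
Proof.
have fact_neq0 : j`!%:R != 0 :> rat by rewrite pnatr_eq0 -lt0n fact_gt0.
rewrite /gbinom big_ord_recr /= factS natrM; field.
by rewrite fact_neq0 addrC natr1 pnatr_eq0.
Qed.

Lemma gbinomD1 x l : gbinom (x + 1) l.+1 = gbinom x l.+1 + gbinom x l.
Proof.
rewrite /gbinom big_ord_recl big_ord_recr /=.
have -> : \prod_(i < l) (x + 1 - (bump 0 i)%:R) = \prod_(i < l) (x - i%:R).
  by apply: eq_bigr => i _; rewrite /bump add1n -natr1; ring.
have fact_neq0 : l`!%:R != 0 :> rat by rewrite pnatr_eq0 -lt0n fact_gt0.
rewrite factS natrM -natr1; field.
by rewrite fact_neq0 natr1 pnatr_eq0.
Qed.

Lemma gbinom_nat n j : gbinom n%:R j = 'C(n, j)%:R.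
Proof.
elim: j => [|j IHj]; first by rewrite gbinom0 bin0.
have jS_neq0 : j.+1%:R != 0 :> rat by rewrite pnatr_eq0.
rewrite gbinomS IHj; apply: (mulIf jS_neq0); rewrite mulfVK //.
have [le_jn | lt_nj] := leqP j n.
  by rewrite -natrB // -!natrM mulnC [in RHS]mulnC mul_bin_left.
by rewrite !bin_small ?mul0r // ltnW.
Qed.

Lemma natr_binS {F : numFieldType} n m :
  'C(n, m.+1)%:R = (n - m)%:R * 'C(n, m)%:R / m.+1%:R :> F.
Proof.
by rewrite -natrM -mul_bin_left natrM [_ * 'C(_, _)%:R]mulrC mulfK // pnatr_eq0.
Qed.

Lemma odd_dfactS j : odd_dfact j.+1 = (odd_dfact j * (2 * j + 1))%N.
Proof. by rewrite /odd_dfact big_ord_recr. Qed.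

Lemma even_dfactS j : even_dfact j.+1 = (even_dfact j * (2 * j.+1))%N.
Proof. by rewrite /even_dfact expnS factS; ring. Qed.

Lemma even_dfact_gt0 j : (0 < even_dfact j)%N.
Proof. by rewrite /even_dfact muln_gt0 expn_gt0 fact_gt0. Qed.

Lemma gbinom_half l :
  gbinom (1 / 2) l.+1 = (-1) ^+ l * (odd_dfact l)%:R / (even_dfact l.+1)%:R.
Proof.
elim: l => [|l IHl].
  by rewrite gbinomS gbinom0 /odd_dfact /even_dfact big_ord0 expn1 subr0 !mul1r divr1.
rewrite gbinomS IHl odd_dfactS (even_dfactS l.+1) exprS.
move: (even_dfact l.+1) (even_dfact_gt0 l.+1) => E E_gt0.
rewrite !natrM natrD natrM; field.
by rewrite -natrD !pnatr_eq0; lia.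
Qed.

Lemma Pnk_binom n k : (k <= n)%N ->
  Pnk n k = k`!%:R * (odd_dfact (n - k))%:R * 'C(2 * n - k.+1, 2 * (n - k))%:R.
Proof.
move=> le_kn; rewrite /Pnk; case def_e: (n - k)%N => [|e].
  by rewrite muln0 gbinom0 bin0.
suff -> : (2 * n)%:R - k%:R - 1 = (2 * n - k.+1)%:R :> rat by rewrite gbinom_nat.
by rewrite natrB; [rewrite -natr1 opprD addrA | lia].
Qed.

Lemma Pnn n : Pnk n n = n`!%:R.
Proof. by rewrite Pnk_binom // subnn muln0 bin0 /odd_dfact big_ord0 !mulr1. Qed.

Definition closed_form (k l : nat) : rat :=
  if (l < k)%N then 0 else (-1) ^+ l / (even_dfact l)%:R * Pnk l k.

Lemma closed_form_small k l : (l < k)%N -> closed_form k l = 0.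
Proof. by rewrite /closed_form => ->. Qed.

Lemma closed_form0 l : closed_form 0 l = (l == 0)%:R.
Proof.
case: l => [|l]; first by rewrite /closed_form Pnn /even_dfact /= !(mulr1, divr1).
by rewrite /closed_form /= Pnk_binom // bin_small ?mulr0 //; lia.
Qed.

Lemma closed_form1 l : closed_form 1 l.+1 = - gbinom (1 / 2) l.+1.
Proof.
rewrite /closed_form /= Pnk_binom // gbinom_half subSS subn0.
have -> : (2 * l.+1 - 2 = 2 * l)%N by lia.
by rewrite binn exprS mulr1 mul1r !mulN1r !mulNr mulrAC.
Qed.

Lemma closed_form_diag k : closed_form k k = (-1) ^+ k / 2 ^+ k.
Proof.
rewrite /closed_form ltnn Pnn /even_dfact natrM natrX; field.
by rewrite expf_neq0 ?pnatr_eq0 -?lt0n ?fact_gt0.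
Qed.

Lemma closed_formE k l : (k <= l)%N -> closed_form k l =
  (-1) ^+ l / (even_dfact l)%:R * k`!%:R * (odd_dfact (l - k))%:R
  * 'C(2 * l - k.+1, 2 * (l - k))%:R.
Proof. by move=> le_kl; rewrite /closed_form ltnNge le_kl Pnk_binom // !mulrA. Qed.

Lemma closed_form_rec_gt k l : (k < l)%N ->
  closed_form k.+2 l.+1 = 2 * closed_form k.+1 l.+1 + closed_form k l.
Proof.
move=> lt_kl; rewrite !closed_formE; [|lia..].
have [e def_l] : exists e, l = (k + e).+1 by exists (l - k.+1)%N; lia.
(* With N = 2l - k - 1 the three binomials are C(N, 2e), C(N+1, 2e+2) and C(N, 2e+2);
   expressing them all through C(N, 2e) leaves a rational identity. *)
set N := (k + 2 * e + 1)%N.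
have -> : (2 * l.+1 - k.+3 = N)%N by lia.
have -> : (2 * l.+1 - k.+2 = N.+1)%N by lia.
have -> : (2 * l - k.+1 = N)%N by lia.
have -> : (l.+1 - k.+2 = e)%N by lia.
have -> : (l.+1 - k.+1 = e.+1)%N by lia.
have -> : (l - k = e.+1)%N by lia.
have -> : (2 * e.+1 = (2 * e).+2)%N by lia.
rewrite binS natrD (natr_binS N (2 * e).+1) (natr_binS N (2 * e)).
have -> : (N - (2 * e).+1 = k)%N by lia.
have -> : (N - 2 * e = k.+1)%N by lia.
rewrite odd_dfactS (even_dfactS l) !factS exprS.
move: (even_dfact l) (even_dfact_gt0 l) (odd_dfact e) => El El_gt0 Oe.
rewrite def_l !natrM.
have El_pos : 0 < El%:R :> rat by rewrite ltr0n.
have [k_ge0 e_ge0] := (ler0n rat k, ler0n rat e).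
field; apply/and4P; split; apply: lt0r_neq0; lra.
Qed.

Lemma closed_form_rec k l :
  closed_form k.+2 l.+1 = 2 * closed_form k.+1 l.+1 + closed_form k l.
Proof.
have [lt_lk | lt_kl | ->] := ltngtP l k.
- by rewrite !closed_form_small ?mulr0 ?addr0 //; lia.
- exact: closed_form_rec_gt.
by rewrite closed_form_small // !closed_form_diag !exprS; field; rewrite expf_neq0.
Qed.

Definition half_binom (l m : nat) : rat := gbinom (m%:R / 2) l.

Lemma half_binomD2 l m : half_binom l.+1 m.+2 = half_binom l.+1 m + half_binom l m.
Proof. by rewrite /half_binom -gbinomD1 -addn2 natrD mulrDl divff. Qed.

Lemma alt_binom_sum_half_binom0 k : alt_binom_sum k.+1 (half_binom 0) = 0.
Proof.
rewrite (@eq_alt_binom_sum _ _ _ (fun=> 1)) ?alt_binom_sum_cst // => m.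
by rewrite /half_binom gbinom0.
Qed.

Lemma alt_binom_sum_half_binom_rec k l :
  alt_binom_sum k.+2 (half_binom l.+1) =
  2 * alt_binom_sum k.+1 (half_binom l.+1) + alt_binom_sum k (half_binom l).
Proof.
have -> : alt_binom_sum k (half_binom l) =
    alt_binom_sum k (fun m => half_binom l.+1 m.+2 - half_binom l.+1 m).
  by apply: eq_alt_binom_sum => m; rewrite half_binomD2 addrC addKr.
rewrite !alt_binom_sumS alt_binom_sumB /=; ring.
Qed.

Lemma alt_binom_sum_half_binom k l : alt_binom_sum k (half_binom l) = closed_form k l.
Proof.
suff /(_ k) [-> //] : forall k,
    (forall l, alt_binom_sum k (half_binom l) = closed_form k l) /\
    (forall l, alt_binom_sum k.+1 (half_binom l) = closed_form k.+1 l).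
move=> {k l}; elim=> [|k [IHk IHk1]].
  split=> [l | [|l]].
  - by rewrite alt_binom_sum0 closed_form0 /half_binom mul0r (gbinom_nat 0) bin0n.
  - by rewrite alt_binom_sum_half_binom0 closed_form_small.
  - rewrite alt_binom_sumS !alt_binom_sum0 closed_form1 /half_binom /= mul0r.
    by rewrite (gbinom_nat 0) bin0n sub0r.
split=> // -[|l]; first by rewrite alt_binom_sum_half_binom0 closed_form_small.
by rewrite alt_binom_sum_half_binom_rec IHk IHk1 closed_form_rec.
Qed.

Theorem lemma2p2 (k l : nat) :
  \sum_(0 <= m < k.+1) (-1) ^+ m * ('C(k, m))%:R * gbinom (m%:R / 2) l =
  (if (l < k)%N then 0
   else (-1) ^+ l / (even_dfact l)%:R * Pnk l k).
Proof. exact: alt_binom_sum_half_binom. Qed.
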